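(* Let $\vec G$ be any orientation of the Coxeter diagram $s_1-\cdots-s_{n-1}$ of $S_n$, with up indices determined as described below. For each transposition $(m,M)$ with $1\le m<M\le n$, there is a unique join-irreducible $\gamma$ of the weak order on $S_n$ that is not contracted by $\Theta(\vec G)$ and whose associated left reflection is $(m,M)$. The subset associated to this $\gamma$ is $A=\{m\}\cup\{b\in(m,M): b \text{ up}\}\cup(M,n]$.
   Context: Weak order on $S_n$: $x\le y$ iff $I(x)\subseteq I(y)$, $I(x)=\{(x_j,x_i):i<j,x_i>x_j\}$. An element is join-irreducible if it covers exactly one element $\gamma_*$. Join-irreducibles of $S_n$ correspond bijectively to subsets $A\subseteq[n]$ with $M:=\max([n]\setminus A)>m:=\min A$: $\gamma$ lists the elements of $[n]\setminus A$ in increasing order followed by the elements of $A$ in increasing order (one-line notation); its associated left reflection is the transposition $(m,M)$ (equivalently $\gamma s\gamma^{-1}$ for its unique right descent $s$). A congruence $\Theta$ contracts $\gamma$ if $\gamma\equiv\gamma_*$. $\Theta(\vec G)$ is the smallest lattice congruence of the weak order with $t\equiv ts$ for each directed edge $s\to t$ of $\vec G$, where $s_i=(i,i+1)$. For $b\in[2,n-1]$, $b$ is up if $s_b\to s_{b-1}$ in $\vec G$ and down if $s_{b-1}\to s_b$. *)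

(* Permutations of [n] are {perm 'I_n}; the ordinal k : 'I_n
   represents the integer k+1 of [n] = {1,...,n}.  A permutation x is read in
   one-line notation: x_i (1-based position i) is the value x (i-1). *)
From mathcomp Require Import all_boot all_fingroup.
Set Implicit Arguments. Unset Strict Implicit. Unset Printing Implicit Defensive.
Local Open Scope group_scope.

Section WeakOrder.
Variable n : nat.

Definition inv_set (x : 'S_n) : {set 'I_n * 'I_n} :=
  [set p : 'I_n * 'I_n |
    [exists i : 'I_n, exists j : 'I_n,
      [&& (i < j)%N, (x j < x i)%N & p == (x j, x i)]]].

Definition weak_le (x y : 'S_n) : bool := inv_set x \subset inv_set y.
Definition weak_lt (x y : 'S_n) : bool := (x != y) && weak_le x y.

Definition covers (y z : 'S_n) : bool :=
  weak_lt z y && [forall w, ~~ (weak_lt z w && weak_lt w y)].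

Definition join_irr (y : 'S_n) : bool := #|[set z | covers y z]| == 1%N.

Definition is_join (x y j : 'S_n) : bool :=
  [&& weak_le x j, weak_le y j & [forall u, weak_le x u ==> weak_le y u ==> weak_le j u]].
Definition is_meet (x y m : 'S_n) : bool :=
  [&& weak_le m x, weak_le m y & [forall u, weak_le u x ==> weak_le u y ==> weak_le u m]].

Definition lattice_congruence (R : 'S_n -> 'S_n -> Prop) : Prop :=
  [/\ (forall x, R x x),
      (forall x y, R x y -> R y x),
      (forall x y z, R x y -> R y z -> R x z),
      (forall x y z jx jy, R x y -> is_join x z jx -> is_join y z jy -> R jx jy) &
      (forall x y z mx my, R x y -> is_meet x z mx -> is_meet y z my -> R mx my)].

(* simple transposition s_i = (i, i+1), for 1 <= i <= n-1 (identity otherwise) *)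
Definition sgen (i : nat) : 'S_n :=
  match (insub i.-1 : option 'I_n), (insub i : option 'I_n) with
  | Some a, Some b => tperm a b
  | _, _ => 1
  end.

(* Composition as functions: (comp f g) k = f (g k).  In MathComp,
   (g * f) k = f (g k). *)
Definition comp (f g : 'S_n) : 'S_n := g * f.

(* The orientation of the path s_1 - ... - s_{n-1} is given by
   up : nat -> bool on b in [2, n-1]:
   up b  <->  edge s_b -> s_{b-1};  ~~ up b  <->  edge s_{b-1} -> s_b.
   A directed edge s -> t yields the generating relation t == t s. *)
Definition edge_rel (up : nat -> bool) (x y : 'S_n) : Prop :=
  exists b : nat, [/\ (2 <= b)%N, (b <= n.-1)%N &
    let st := if up b then (sgen b, sgen b.-1) else (sgen b.-1, sgen b) in
    x = st.2 /\ y = comp st.2 st.1].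

Definition Theta (up : nat -> bool) (x y : 'S_n) : Prop :=
  forall R, lattice_congruence R -> (forall a b, edge_rel up a b -> R a b) -> R x y.

(* Theta contracts gamma: gamma == gamma_* (its unique lower cover) *)
Definition contracts (Th : 'S_n -> 'S_n -> Prop) (g : 'S_n) : Prop :=
  exists z, covers g z /\ Th g z.

Definition right_descent (g : 'S_n) (i : nat) : bool :=
  [&& (1 <= i)%N, (i <= n.-1)%N & weak_lt (comp g (sgen i)) g].

Definition assoc_left_reflection (g r : 'S_n) : Prop :=
  exists i, right_descent g i /\ r = comp (comp g (sgen i)) g^-1.

(* gamma lists the elements of [n] \ A increasingly, then those of A
   increasingly (one-line notation); i.e. A is the subset associated to gamma *)
Definition lists_compl_then (A : {set 'I_n}) (g : 'S_n) : Prop :=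
  (forall i : 'I_n, (g i \in A) = (#|~: A| <= i)%N) /\
  (forall i j : 'I_n, (i < j)%N -> (g i \in A) = (g j \in A) -> (g i < g j)%N).

End WeakOrder.

(* For [a < b], [arc_perm a b S] lists the values outside
   A = {a} u {c in (a, b) | S c} u (b, n) increasingly and then those of A
   increasingly.  These are exactly the join-irreducibles with left reflection
   (a b): such a permutation has a single descent, at the adjacent positions of
   [b] and [a], and swapping them gives its unique lower cover.

   With [S c = up c.+1], the relation "x and y lie above the same
   [arc_perm p q S]" is a lattice congruence (joins are controlled through the
   dual meet-irreducibles [coarc_perm p q S]) containing every generating
   relation; so it contains Theta and separates [arc_perm a b S] from its lower
   cover.  Conversely, if [S] disagrees with the orientation at some [c] in
   (a, b), shrinking the interval from the end away from [c] and transporting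
   the contraction by one join and one meet shows that Theta contracts
   [arc_perm a b S], the interval of length 2 being a generating relation. *)

From Pilot Require Import Defs.
From mathcomp Require Import all_boot all_fingroup zify.
Set Implicit Arguments. Unset Strict Implicit. Unset Printing Implicit Defensive.
Local Open Scope group_scope.

Section WeakOrder.
Variable n : nat.
Implicit Types (x y z : 'S_n) (v w : 'I_n).

Definition inverted x v w : bool := (x^-1 w < x^-1 v)%N.

Lemma mem_inv_set x v w : ((v, w) \in inv_set x) = (v < w)%N && inverted x v w.
Proof.
rewrite inE /inverted; apply/existsP/andP.
- by case=> i /existsP [j /and3P [ij xji /eqP [-> ->]]]; rewrite !permK.
- case=> vw xwv; exists (x^-1 w); apply/existsP; exists (x^-1 v).
  by rewrite xwv !permKV vw eqxx.
Qed.

Lemma weak_leP x y :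
  reflect (forall v w, (v < w)%N -> inverted x v w -> inverted y v w) (weak_le x y).
Proof.
apply: (iffP subsetP) => [le_xy v w vw xvw | le_xy [v w]].
- by have := le_xy (v, w); rewrite !mem_inv_set vw xvw; apply.
- by rewrite !mem_inv_set => /andP [vw /(le_xy _ _ vw) ->]; rewrite vw.
Qed.

Lemma weak_le_refl x : weak_le x x.
Proof. exact: subxx. Qed.

Lemma weak_le_trans x y z : weak_le x y -> weak_le y z -> weak_le x z.
Proof. exact: subset_trans. Qed.

Lemma invertedC x v w : v != w -> inverted x w v = ~~ inverted x v w.
Proof.
move=> neq_vw; rewrite /inverted ltn_neqAle -leqNgt andb_idl // => _.
by rewrite val_eqE (inj_eq perm_inj).
Qed.

Lemma card_ltn_ord k : (k <= n)%N -> #|[set i : 'I_n | (i < k)%N]| = k.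
Proof.
move=> le_kn; have -> : [set i : 'I_n | (i < k)%N] = [set widen_ord le_kn i | i in 'I_k].
  apply/setP => i; rewrite inE; apply/idP/imsetP => [lt_ik | [j _ ->]]; last by rewrite /= ltn_ord.
  by exists (Ordinal lt_ik) => //; apply: val_inj.
by rewrite card_imset ?card_ord // => i j [] /val_inj.
Qed.

Lemma perm_rank x v : (x v : nat) = #|[set w | (x w < x v)%N]|.
Proof.
have -> : [set w | (x w < x v)%N] = x @^-1: [set i : 'I_n | (i < x v)%N].
  by apply/setP => w; rewrite !inE.
by rewrite card_preimset ?card_ltn_ord //; [apply: ltnW | apply: perm_inj].
Qed.

Lemma perm_inverted_eq x y :
  (forall v w, (v < w)%N -> inverted x v w = inverted y v w) -> x = y.
Proof.
move=> eq_xy; suff eq_inv : x^-1 = y^-1 by rewrite -(invgK x) eq_inv invgK.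
have {}eq_xy v w : inverted x v w = inverted y v w.
  case: (ltngtP v w) => [|wv|/val_inj ->]; [exact: eq_xy | | by rewrite /inverted !ltnn].
  have neq_wv : w != v by rewrite -val_eqE neq_ltn wv.
  by rewrite !(invertedC _ neq_wv) eq_xy.
apply/permP => v; apply: val_inj; rewrite /= (perm_rank x^-1) (perm_rank y^-1).
by apply: eq_card => w; rewrite !inE; apply: eq_xy.
Qed.

Lemma weak_le_anti x y : weak_le x y -> weak_le y x -> x = y.
Proof.
move=> /weak_leP le_xy /weak_leP le_yx; apply: perm_inverted_eq => v w vw.
by apply/idP/idP; [apply: le_xy | apply: le_yx].
Qed.

Section Rank.
Variable f : 'I_n -> nat.

Definition lower_set v : {set 'I_n} := [set w | (f w < f v)%N].

Lemma lower_set_subproof v : (#|lower_set v| < n)%N.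
Proof.
have : lower_set v \subset [set~ v].
  by apply/subsetP => w; rewrite !inE; apply: contraTneq => ->; rewrite ltnn.
move/subset_leq_card/leq_ltn_trans; apply.
by rewrite cardsC1 card_ord ltn_predL (leq_ltn_trans _ (ltn_ord v)).
Qed.

Definition rank v : 'I_n := Ordinal (lower_set_subproof v).

Lemma ltn_rank v w : (rank v < rank w)%N = (f v < f w)%N.
Proof.
rewrite [LHS]/=; apply/idP/idP => [|lt_vw]; last first.
  apply/proper_card/properP; split; last by exists v; rewrite !inE ?ltnn.
  by apply/subsetP => u; rewrite !inE => lt_uv; apply: ltn_trans lt_uv lt_vw.
apply: contraTT; rewrite -!leqNgt => le_wv.
apply: subset_leq_card; apply/subsetP => u; rewrite !inE => lt_uw.
exact: leq_trans lt_uw le_wv.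
Qed.

Hypothesis f_inj : injective f.

Lemma rank_inj : injective rank.
Proof.
move=> v w eq_vw; apply: f_inj.
case: (ltngtP (f v) (f w)) => [|| //]; [rewrite -ltn_rank | rewrite -(ltn_rank w v)].
  by rewrite eq_vw ltnn.
by rewrite eq_vw ltnn.
Qed.

End Rank.

Definition lex_key (k : 'I_n -> nat) v : nat := k v * n + v.

Lemma ltn_lex_key k v w :
  (lex_key k v < lex_key k w)%N = (k v < k w)%N || (k v == k w) && (v < w)%N.
Proof.
rewrite /lex_key; have := ltn_ord v; have := ltn_ord w.
case: (ltngtP (k v) (k w)) => [lt_k | lt_k | ->] /= ? ?; last by rewrite ltn_add2l.
- by apply/idP; have : (k v).+1 <= k w by []; nia.
- by apply/negP; have : (k w).+1 <= k v by []; nia.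
Qed.

Lemma lex_key_inj k : injective (lex_key k).
Proof.
move=> v w /(congr1 (modn^~ n)) /=; rewrite /lex_key !modnMDl !modn_small //.
exact: val_inj.
Qed.

(* The permutation listing the values [v] in one-line notation by increasing
   key [k v], ties broken by increasing value. *)
Definition sort_perm (k : 'I_n -> nat) : 'S_n := (perm (rank_inj (@lex_key_inj k)))^-1.

Lemma inverted_sort_perm k v w : (v < w)%N -> inverted (sort_perm k) v w = (k w < k v)%N.
Proof.
move=> lt_vw; rewrite /inverted /sort_perm invgK !permE ltn_rank ltn_lex_key.
by rewrite [(w < v)%N]ltnNge (ltnW lt_vw) andbF orbF.
Qed.

Lemma sort_perm_le k k' :
  (forall v w, (v < w)%N -> (k w < k v)%N -> (k' w < k' v)%N) ->
  weak_le (sort_perm k) (sort_perm k').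
Proof. by move=> le_k; apply/weak_leP => v w vw; rewrite !inverted_sort_perm //; apply: le_k. Qed.

End WeakOrder.

Section Lattice.
Variable n : nat.
Implicit Types (x y z j m u h g : 'S_n).

Lemma is_join_le x z j y : is_join x z j -> weak_le j y <-> weak_le x y /\ weak_le z y.
Proof.
case/and3P => xj zj /forallP join_min; split=> [jy | [xy zy]].
- by split; apply: weak_le_trans jy.
- by have := join_min y; rewrite xy zy.
Qed.

Lemma is_meet_le x z m y : is_meet x z m -> weak_le y m <-> weak_le y x /\ weak_le y z.
Proof.
case/and3P => mx mz /forallP meet_max; split=> [ym | [yx yz]].
- by split; apply: weak_le_trans ym _.
- by have := meet_max y; rewrite yx yz.
Qed.

Lemma is_join_of_le x y : weak_le x y -> is_join x y y.
Proof.
move=> le_xy; apply/and3P; split=> //; first exact: weak_le_refl.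
by apply/forallP => u; apply/implyP => _; apply/implyP.
Qed.

Lemma is_meet_of_le x y : weak_le y x -> is_meet x y y.
Proof.
move=> le_yx; apply/and3P; split=> //; first exact: weak_le_refl.
by apply/forallP => u; apply/implyP => _; apply/implyP.
Qed.

Lemma is_meet_of_ge x y : weak_le x y -> is_meet x y x.
Proof.
move=> le_xy; apply/and3P; split=> //; first exact: weak_le_refl.
by apply/forallP => u; apply/implyP => ux; apply/implyP.
Qed.

Lemma is_joinI x y j : weak_le x j -> weak_le y j ->
  (forall v w : 'I_n, (v < w)%N -> inverted j v w ->
     [\/ inverted x v w, inverted y v w |
      exists2 m : 'I_n, (v < m < w)%N &
        inverted x v m && inverted y m w || inverted y v m && inverted x m w]) ->
  is_join x y j.
Proof.
move=> le_xj le_yj inv_j; apply/and3P; split=> //; apply/forallP => u.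
apply/implyP => /weak_leP le_xu; apply/implyP => /weak_leP le_yu.
apply/weak_leP => v w vw /(inv_j _ _ vw) [/(le_xu _ _ vw) | /(le_yu _ _ vw) | ] //.
case=> m /andP [vm mw] /orP [] /andP [h1 h2].
- by have := le_xu _ _ vm h1; have := le_yu _ _ mw h2; rewrite /inverted; lia.
- by have := le_yu _ _ vm h1; have := le_xu _ _ mw h2; rewrite /inverted; lia.
Qed.

Lemma is_meetI x y m : weak_le m x -> weak_le m y ->
  (forall v w : 'I_n, (v < w)%N -> inverted x v w -> inverted y v w -> inverted m v w) ->
  is_meet x y m.
Proof.
move=> le_mx le_my inv_m; apply/and3P; split=> //; apply/forallP => u.
apply/implyP => /weak_leP le_ux; apply/implyP => /weak_leP le_uy.
by apply/weak_leP => v w vw uvw; apply: inv_m => //; [apply: le_ux | apply: le_uy].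
Qed.

(* Joining with [x] and then meeting with [g] carries the identification of
   [y0] and [y1] down to [h] and [g]. *)
Lemma congruence_transfer (R : 'S_n -> 'S_n -> Prop) y0 y1 x j g u h :
  lattice_congruence R -> R y0 y1 ->
  weak_le y0 x -> is_join y1 x j -> weak_le g j -> is_meet x g u ->
  weak_le u h -> weak_le h g -> R h g.
Proof.
case=> _ Rsym Rtrans Rjoin Rmeet R01 le0x join1 le_gj meet_u le_uh le_hg.
have Rxj : R x j := Rjoin _ _ _ _ _ R01 (is_join_of_le le0x) join1.
have Rug : R u g := Rmeet _ _ _ _ _ Rxj meet_u (is_meet_of_le le_gj).
have Ruh : R u h := Rmeet _ _ _ _ _ Rug (is_meet_of_ge le_uh) (is_meet_of_le le_hg).
exact: Rtrans _ _ _ (Rsym _ _ Ruh) Rug.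
Qed.

End Lattice.

Section Arcs.
Variable n : nat.
Implicit Types (v w p q r : 'I_n).

Definition arc_inverted (T : rel 'I_n) (u : nat -> bool) p q : Prop :=
  forall v w, (p <= v)%N -> (v < w)%N -> (w <= q)%N ->
    (v == p) || u v -> (w == q) || ~~ u w -> T v w.

Lemma arc_inverted_ext (T T' : rel 'I_n) (u u' : nat -> bool) p q :
  T =2 T' -> u =1 u' -> arc_inverted T u p q <-> arc_inverted T' u' p q.
Proof.
move=> eqT equ; split=> arc v w pv vw wq hv hw.
- by rewrite -eqT; apply: arc; rewrite // ?equ.
- by rewrite eqT; apply: arc; rewrite // -?equ.
Qed.

Lemma arc_inverted_ends (T : rel 'I_n) (u : nat -> bool) p q :
  arc_inverted T u p q -> (p < q)%N -> T p q.
Proof. by move=> arc pq; apply: arc; rewrite ?eqxx. Qed.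

Variables (T : rel 'I_n) (u : nat -> bool).
Hypothesis notT_trans : forall v r w, (v < r)%N -> (r < w)%N ->
  ~~ T v r -> ~~ T r w -> ~~ T v w.

Lemma notT_subarc v w v' w' : (v <= v')%N -> (v' < w')%N -> (w' <= w)%N ->
  (v' == v) || u v' -> (w' == w) || ~~ u w' ->
  (forall r, (v < r)%N -> (r < w)%N -> u r -> ~~ T v r) ->
  (forall r, (v < r)%N -> (r < w)%N -> ~~ u r -> ~~ T r w) ->
  ~~ T v' w' -> ~~ T v w.
Proof.
move=> vv' v'w' w'w hv' hw' notT_v notT_w notT'.
have lt_vw' : (v < w')%N := leq_ltn_trans vv' v'w'.
have step_w : w' != w -> ~~ T v w' -> ~~ T v w.
  move=> nw notT_vw'; have lt_w'w : (w' < w)%N by rewrite ltn_neqAle val_eqE nw.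
  apply: notT_trans lt_vw' lt_w'w notT_vw' (notT_w _ lt_vw' lt_w'w _).
  by move: hw'; rewrite (negbTE nw).
have [ev|nv] := eqVneq v' v.
  have [ew|nw] := eqVneq w' w; first by rewrite -ev -ew.
  by apply: step_w nw _; rewrite -ev.
have lt_vv' : (v < v')%N by rewrite ltn_neqAle val_eqE eq_sym nv.
have lt_v'w : (v' < w)%N by apply: leq_trans v'w' w'w.
have notT_vv' : ~~ T v v' by apply: notT_v => //; move: hv'; rewrite (negbTE nv).
have notT_vw' := notT_trans lt_vv' v'w' notT_vv' notT'.
have [ew|nw] := eqVneq w' w; first by rewrite -ew.
exact: step_w.
Qed.

Lemma arc_inverted_dual p q :
  arc_inverted (fun v w => ~~ T v w) (fun r : nat => ~~ u r) p q <->
  (forall v w, (p <= v)%N -> (v < w)%N -> (w <= q)%N ->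
     (v == p) || ~~ u v -> (w == q) || u w -> ~ arc_inverted T u v w).
Proof.
split=> [dual v w pv vw wq hv hw arc | no_arc].
  have := dual v w pv vw wq hv; rewrite /= negbK (arc_inverted_ends arc vw).
  by move/(_ hw).
suff notT : forall d v w, (w - v <= d)%N -> (p <= v)%N -> (v < w)%N -> (w <= q)%N ->
    (v == p) || ~~ u v -> (w == q) || u w -> ~~ T v w.
  move=> v w pv vw wq hv hw; apply: (notT (w - v)) => //.
  by move: hw; rewrite /= negbK.
elim=> [|d IH] v w dvw pv vw wq hv hw.
  by move: dvw vw; rewrite leqn0 subn_eq0 leqNgt => /negP.
apply/negP => Tvw; apply: (no_arc v w pv vw wq hv hw) => v' w' vv' v'w' w'w hv' hw'.
apply/negPn/negP => notT'; move: Tvw; apply/negP.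
apply: (notT_subarc vv' v'w' w'w hv' hw' _ _ notT') => r vr rw ur.
- by apply: IH => //; [lia | exact: ltnW (leq_trans rw wq) | rewrite ur orbT].
- by apply: IH => //; [lia | exact: leq_trans pv (ltnW vr) | rewrite ur orbT].
Qed.

End Arcs.

Definition arc_set (a b : nat) (S : nat -> bool) (v : nat) : bool :=
  [|| v == a, (a < v < b)%N && S v | (b < v)%N].

Section ArcCongruence.
Local Open Scope nat_scope.
Variable n : nat.
Implicit Types (x y z : 'S_n) (v w p q r : 'I_n) (S : nat -> bool).

(* Keys are spaced by 4 to leave room for the insertions made by
   [arc_perm_lower] and [arc_perm3]. *)
Definition arc_key a b S (v : 'I_n) : nat := if arc_set a b S v then 4 * (n + v) else 4 * v.

(* In one-line notation: the values outside [arc_set a b S] increasingly, then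
   those inside increasingly.  For [a < b] this is the join-irreducible of the
   statement with subset [arc_set a b S] and left reflection [(a, b)]. *)
Definition arc_perm a b S : 'S_n := sort_perm (arc_key a b S).

Lemma inverted_arc_perm a b S v w : (v < w) ->
  inverted (arc_perm a b S) v w = arc_set a b S v && ~~ arc_set a b S w.
Proof.
move=> vw; rewrite inverted_sort_perm // /arc_key; have := ltn_ord v; have := ltn_ord w.
by case: (arc_set a b S v); case: (arc_set a b S w) => /=; lia.
Qed.

(* [b] moved just after [a]: the lower cover of [arc_perm a b S]. *)
Definition arc_perm_lower a b S : 'S_n :=
  sort_perm (fun v => if (v : nat) == b then 4 * n + 4 * a + 2 else arc_key a b S v).

(* The meet-irreducible dual to [arc_perm a b S]: the permutations below it are
   described by [le_coarc_permP]. *)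
Definition coarc_perm a b S : 'S_n :=
  sort_perm (fun v => 8 * n - arc_key a b (fun r : nat => ~~ S r) v).

Lemma inverted_coarc_perm a b S v w : (v < w) ->
  inverted (coarc_perm a b S) v w =
  ~~ (arc_set a b (fun r : nat => ~~ S r) v && ~~ arc_set a b (fun r : nat => ~~ S r) w).
Proof.
move=> vw; rewrite inverted_sort_perm // /arc_key; have := ltn_ord v; have := ltn_ord w.
by case: (arc_set a b _ v); case: (arc_set a b _ w) => /=; lia.
Qed.

Lemma arc_perm_leP x S p q : (p < q) ->
  weak_le (arc_perm p q S) x <-> arc_inverted (inverted x) S p q.
Proof.
move=> pq; split=> [/weak_leP le_x v w pv vw wq hv hw | arc].
- apply: le_x => //; rewrite inverted_arc_perm // /arc_set.
  by move: hv hw; rewrite -!val_eqE /=; lia.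
- apply/weak_leP => v w vw; rewrite inverted_arc_perm // /arc_set => /andP [hv hw].
  by apply: arc => //; move: hv hw; rewrite -?val_eqE /=; lia.
Qed.

Lemma le_coarc_permP x S p q : (p < q) ->
  weak_le x (coarc_perm p q S) <->
  arc_inverted (fun v w => ~~ inverted x v w) (fun r : nat => ~~ S r) p q.
Proof.
move=> pq; split=> [/weak_leP le_x v w pv vw wq hv hw | arc].
- apply/negP => /(le_x _ _ vw); rewrite inverted_coarc_perm // /arc_set.
  by move: hv hw; rewrite /= -!val_eqE /=; lia.
- apply/weak_leP => v w vw xvw; rewrite inverted_coarc_perm //; apply/negP => /andP [hv hw].
  move: xvw; apply/negP; apply: arc => //; move: hv hw; rewrite /arc_set -?val_eqE /=; lia.
Qed.

Lemma notinverted_trans x v r w : v < r -> r < w ->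
  ~~ inverted x v r -> ~~ inverted x r w -> ~~ inverted x v w.
Proof. rewrite /inverted; lia. Qed.

Lemma inverted_trans x v r w : v < r -> r < w ->
  inverted x v r -> inverted x r w -> inverted x v w.
Proof. rewrite /inverted; lia. Qed.

Lemma le_coarc_perm_arc x S p q : p < q ->
  weak_le x (coarc_perm p q S) <->
  (forall v w, p <= v -> v < w -> w <= q -> (v == p) || ~~ S v -> (w == q) || S w ->
     ~ weak_le (arc_perm v w S) x).
Proof.
move=> pq; rewrite le_coarc_permP // arc_inverted_dual; last exact: notinverted_trans.
by split=> no_arc v w pv vw wq hv hw; [rewrite arc_perm_leP // | rewrite -arc_perm_leP //];
  apply: no_arc.
Qed.

Lemma arc_perm_le_coarc x S p q : p < q ->
  weak_le (arc_perm p q S) x <->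
  (forall v w, p <= v -> v < w -> w <= q -> (v == p) || S v -> (w == q) || ~~ S w ->
     ~ weak_le x (coarc_perm v w S)).
Proof.
move=> pq; rewrite arc_perm_leP //.
rewrite (arc_inverted_ext (T' := fun v w => ~~ ~~ inverted x v w) (u' := fun r : nat => ~~ ~~ S r));
  [| by move=> v w; rewrite negbK | by move=> r; rewrite negbK].
rewrite arc_inverted_dual; last by move=> v r w vr rw; rewrite !negbK; apply: inverted_trans.
split=> no_arc v w pv vw wq hv hw.
- by rewrite le_coarc_permP //; apply: no_arc; rewrite ?negbK.
- by rewrite -le_coarc_permP //; apply: no_arc; rewrite // -[S v]negbK.
Qed.

Definition arc_cong S x y : Prop :=
  forall p q, p < q -> weak_le (arc_perm p q S) x <-> weak_le (arc_perm p q S) y.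

Lemma arc_cong_coarc S x y : arc_cong S x y ->
  forall p q, p < q -> weak_le x (coarc_perm p q S) <-> weak_le y (coarc_perm p q S).
Proof.
move=> xy p q pq; rewrite !le_coarc_perm_arc //.
by split=> no_arc v w pv vw wq hv hw; [rewrite -(xy v w vw) | rewrite (xy v w vw)];
  apply: no_arc.
Qed.

(* Meets are compatible since the permutations above [arc_perm p q S] form a
   filter; joins since, by [arc_perm_le_coarc] and [le_coarc_perm_arc], the
   ideals below the [coarc_perm v w S] are determined by these filters. *)
Lemma lattice_congruence_arc_cong S : lattice_congruence (arc_cong S).
Proof.
split.
- by [].
- by move=> x y xy p q pq; symmetry; apply: xy.
- by move=> x y z xy yz p q pq; apply: iff_trans (xy p q pq) (yz p q pq).
- move=> x y z jx jy xy join_x join_y p q pq; rewrite !arc_perm_le_coarc //.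
  split=> no_coarc v w pv vw wq hv hw; [move: (no_coarc v w) | move: (no_coarc v w)];
    rewrite (is_join_le _ join_x) (is_join_le _ join_y) (arc_cong_coarc xy vw);
    by apply.
- move=> x y z mx my xy meet_x meet_y p q pq.
  by rewrite (is_meet_le _ meet_x) (is_meet_le _ meet_y) (xy p q pq).
Qed.

End ArcCongruence.

Arguments arc_perm {n}.
Arguments arc_perm_lower {n}.
Arguments coarc_perm {n}.

Section Generators.
Variable n : nat.
Implicit Types (x y : 'S_n) (v w p q r : 'I_n) (S : nat -> bool).

Lemma sgenE i (o o' : 'I_n) : (o : nat) = i.-1 -> (o' : nat) = i -> sgen n i = tperm o o'.
Proof. by move=> e e'; rewrite /sgen -e -e' !valK. Qed.

Lemma tpermE_nat (o o' v : 'I_n) :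
  (tperm o o' v : nat) =
  if (v : nat) == o then o' : nat else if (v : nat) == o' then o : nat else v.
Proof.
rewrite !val_eqE; case: tpermP => [->|->|/eqP/negbTE-> /eqP/negbTE->]; rewrite ?eqxx //.
by case: eqP => [->|].
Qed.

Lemma inverted_tperm (o o' v w : 'I_n) : (o' : nat) = o.+1 -> (v < w)%N ->
  inverted (tperm o o') v w = (v == o) && (w == o').
Proof.
by rewrite /inverted tpermV !tpermE_nat -!val_eqE /= => oo' vw; repeat case: ifP; lia.
Qed.

Lemma inverted_tperm_up (o1 o2 o3 v w : 'I_n) :
  (o2 : nat) = o1.+1 -> (o3 : nat) = o2.+1 -> (v < w)%N ->
  inverted (tperm o2 o3 * tperm o1 o2) v w = (v == o1) && ((w == o2) || (w == o3)).
Proof.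
rewrite /inverted invMg !tpermV !permM !tpermE_nat -!val_eqE /= => ? ? ?.
by repeat case: ifP; lia.
Qed.

Lemma inverted_tperm_down (o1 o2 o3 v w : 'I_n) :
  (o2 : nat) = o1.+1 -> (o3 : nat) = o2.+1 -> (v < w)%N ->
  inverted (tperm o1 o2 * tperm o2 o3) v w = (w == o3) && ((v == o1) || (v == o2)).
Proof.
rewrite /inverted invMg !tpermV !permM !tpermE_nat -!val_eqE /= => ? ? ?.
by repeat case: ifP; lia.
Qed.

Lemma arc_perm_le_adjacent x S p q : (q : nat) = p.+1 ->
  weak_le (arc_perm p q S) x = inverted x p q.
Proof.
move=> qp; have pq : (p < q)%N by rewrite qp.
apply/idP/idP => [/(arc_perm_leP _ _ pq) arc | xpq]; first exact: arc_inverted_ends arc pq.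
apply/(arc_perm_leP _ _ pq) => v w pv vw wq _ _.
by have [-> ->] : v = p /\ w = q by split; apply/val_inj => /=; lia.
Qed.

Section InversionPatterns.
Variables (x : 'S_n) (S : nat -> bool) (o1 o2 o3 : 'I_n).
Hypotheses (o21 : (o2 : nat) = o1.+1) (o32 : (o3 : nat) = o2.+1).

Lemma arc_perm_le_single p q : (p < q)%N ->
  (forall v w, (v < w)%N -> inverted x v w = (v == o1) && (w == o2)) ->
  weak_le (arc_perm p q S) x = (p == o1) && (q == o2).
Proof.
move=> pq inv_x; apply/idP/idP => [/(arc_perm_leP _ _ pq) arc | ].
  by rewrite -inv_x //; apply: arc_inverted_ends arc pq.
by case/andP => /eqP -> /eqP ->; rewrite arc_perm_le_adjacent // inv_x ?o21 // !eqxx.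
Qed.

Lemma arc_perm_le_up p q : (p < q)%N -> S o2 ->
  (forall v w, (v < w)%N -> inverted x v w = (v == o1) && ((w == o2) || (w == o3))) ->
  weak_le (arc_perm p q S) x = (p == o1) && (q == o2).
Proof.
move=> pq So2 inv_x; apply/idP/idP => [/(arc_perm_leP _ _ pq) arc | ]; last first.
  by case/andP => /eqP -> /eqP ->; rewrite arc_perm_le_adjacent // inv_x ?o21 // !eqxx.
move: (arc_inverted_ends arc pq); rewrite inv_x // => /andP [/eqP p1 /orP [-> | /eqP q3]].
  by rewrite p1 eqxx.
have o21F : (o2 == o1) = false by apply/negbTE/eqP => /(congr1 val) /=; lia.
have : inverted x o2 o3 by apply: arc; rewrite ?p1 ?q3 ?eqxx ?So2 ?orbT //; lia.
by rewrite inv_x ?o32 // o21F.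
Qed.

Lemma arc_perm_le_down p q : (p < q)%N -> ~~ S o2 ->
  (forall v w, (v < w)%N -> inverted x v w = (w == o3) && ((v == o1) || (v == o2))) ->
  weak_le (arc_perm p q S) x = (p == o2) && (q == o3).
Proof.
move=> pq So2 inv_x; apply/idP/idP => [/(arc_perm_leP _ _ pq) arc | ]; last first.
  by case/andP => /eqP -> /eqP ->; rewrite arc_perm_le_adjacent // inv_x ?o32 // !eqxx orbT.
move: (arc_inverted_ends arc pq); rewrite inv_x // => /andP [/eqP q3 /orP [/eqP p1 | ->]].
  have o32F : (o2 == o3) = false by apply/negbTE/eqP => /(congr1 val) /=; lia.
  have : inverted x o1 o2 by apply: arc; rewrite ?p1 ?q3 ?eqxx ?So2 ?orbT //; lia.
  by rewrite inv_x ?o21 // o32F.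
by rewrite q3 eqxx.
Qed.

End InversionPatterns.

(* The ordinal [r] stands for the integer [r.+1] of [[n]], whence the shift. *)
Lemma edge_rel_arc_cong (up : nat -> bool) x y :
  edge_rel up x y -> arc_cong (fun r : nat => up r.+1) x y.
Proof.
case=> b [b2 bn]; have lt_bn : (b < n)%N by lia.
pose o3 := Ordinal lt_bn; pose o2 := Ordinal (leq_ltn_trans (leq_pred b) lt_bn).
pose o1 := Ordinal (leq_ltn_trans (leq_pred b.-1) (leq_ltn_trans (leq_pred b) lt_bn)).
have o21 : (o2 : nat) = o1.+1 by rewrite /= prednK //; lia.
have o32 : (o3 : nat) = o2.+1 by rewrite /= prednK //; lia.
have upb : up (o2 : nat).+1 = up b by rewrite -o32.
rewrite /Defs.comp (sgenE (o := o2) (o' := o3)) // (sgenE (o := o1) (o' := o2)) //.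
case upE : (up b) => -[-> ->] p q pq.
- rewrite (arc_perm_le_single _ o21 pq (fun v w => inverted_tperm o21)).
  by rewrite (arc_perm_le_up o21 o32 pq _ (fun v w => inverted_tperm_up o21 o32)) ?upb.
- rewrite (arc_perm_le_single _ o32 pq (fun v w => inverted_tperm o32)).
  by rewrite (arc_perm_le_down o21 o32 pq _ (fun v w => inverted_tperm_down o21 o32)) ?upb ?upE.
Qed.

End Generators.

Lemma Theta_arc_cong (up : nat -> bool) n (x y : 'S_n) :
  Theta up x y -> arc_cong (fun r : nat => up r.+1) x y.
Proof. by apply; [apply: lattice_congruence_arc_cong | apply: edge_rel_arc_cong]. Qed.

Section Covers.
Variable n : nat.
Implicit Types (x y z g : 'S_n) (v w : 'I_n).

Lemma ltn_swap_adjacent (o1 o2 p q : nat) : o2 = o1.+1 -> p != q ->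
  ((if q == o1 then o2 else if q == o2 then o1 else q) <
   (if p == o1 then o2 else if p == o2 then o1 else p)) =
  (if (p == o1) && (q == o2) || (p == o2) && (q == o1) then ~~ (q < p) else q < p).
Proof. by move=> -> neq_pq; repeat (case: ifP => //=); lia. Qed.

Lemma inverted_tperm_mul g (o1 o2 : 'I_n) v w : (o2 : nat) = o1.+1 -> v != w ->
  inverted (tperm o1 o2 * g) v w =
  if ((g^-1 v : nat) == o1) && ((g^-1 w : nat) == o2) ||
     ((g^-1 v : nat) == o2) && ((g^-1 w : nat) == o1)
  then ~~ inverted g v w else inverted g v w.
Proof.
move=> o21 neq_vw; rewrite /inverted invMg tpermV !permM !tpermE_nat.
by apply: ltn_swap_adjacent; rewrite // val_eqE (inj_eq perm_inj).
Qed.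

Lemma covers_add_inversion x y v0 w0 : (v0 < w0)%N ->
  inverted y v0 w0 -> ~~ inverted x v0 w0 ->
  (forall v w, (v < w)%N -> inverted y v w = inverted x v w || (v == v0) && (w == w0)) ->
  covers y x.
Proof.
move=> vw0 y_vw0 x_vw0 inv_y.
have le_xy : weak_le x y by apply/weak_leP => v w vw xvw; rewrite inv_y // xvw.
have inv_y0 v w : (v < w)%N -> inverted y v w -> ~~ inverted x v w -> v = v0 /\ w = w0.
  by move=> vw; rewrite inv_y // => /orP [-> // | /andP [/eqP -> /eqP ->]].
apply/andP; split.
  by rewrite /weak_lt le_xy andbT; apply: contraNneq x_vw0 => ->.
apply/forallP => z; apply/negP => /andP [/andP [neq_xz le_xz] /andP [neq_zy le_zy]].
case z_vw0 : (inverted z v0 w0).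
- move: neq_zy; rewrite (weak_le_anti le_zy) ?eqxx //; apply/weak_leP => v w vw yvw.
  case xvw : (inverted x v w); first exact: (weak_leP _ _ le_xz).
  by have [-> ->] := inv_y0 v w vw yvw (negbT xvw).
- move: neq_xz; rewrite (weak_le_anti le_xz) ?eqxx //; apply/weak_leP => v w vw zvw.
  case xvw : (inverted x v w) => //.
  have [ev ew] := inv_y0 v w vw ((weak_leP _ _ le_zy) _ _ vw zvw) (negbT xvw).
  by move: zvw; rewrite ev ew z_vw0.
Qed.

Lemma covers_descent g (o1 o2 : 'I_n) : (o2 : nat) = o1.+1 -> (g o2 < g o1)%N ->
  covers g (tperm o1 o2 * g).
Proof.
move=> o21 desc; apply: (covers_add_inversion desc).
- by rewrite /inverted !permK o21.
- rewrite inverted_tperm_mul //; last by rewrite -val_eqE /= neq_ltn desc.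
  by rewrite !permK !eqxx /= orbT negbK /inverted !permK o21.
- move=> v w vw; rewrite inverted_tperm_mul //; last by rewrite -val_eqE /= neq_ltn vw.
  have gK u (o : 'I_n) : ((g^-1 u : nat) == o) = (u == g o).
    by rewrite val_eqE; apply/eqP/eqP => [<- | ->]; rewrite ?permKV ?permK.
  rewrite !gK; case: (boolP ((v == g o1) && (w == g o2))) => [/andP [/eqP ev /eqP ew] | _].
    by move: vw desc; rewrite ev ew; lia.
  case: (boolP ((v == g o2) && (w == g o1))) => [/andP [/eqP -> /eqP ->] | _].
    by rewrite orbT /inverted !permK o21 ltnSn.
  by rewrite /= orbF.
Qed.

Lemma comp_tperm_conj g (o1 o2 : 'I_n) :
  Defs.comp (Defs.comp g (tperm o1 o2)) g^-1 = tperm (g o1) (g o2).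
Proof. by rewrite /Defs.comp -tpermJ. Qed.

Lemma right_descent_tperm g i (o1 o2 : 'I_n) : (o2 : nat) = o1.+1 -> (o2 : nat) = i ->
  right_descent g i = (g o2 < g o1)%N.
Proof.
move=> o21 o2i; have o1i : (o1 : nat) = i.-1 by rewrite -o2i o21.
rewrite /right_descent /Defs.comp (sgenE o1i o2i) -o2i o21 /=.
have -> : (o1.+1 <= n.-1)%N by move: (ltn_ord o2); lia.
apply/idP/idP => [lt_tg | desc]; last first.
  by case/andP: (covers_descent o21 desc).
case: (ltngtP (g o2) (g o1)) => // [asc | /val_inj /perm_inj eq_o]; last first.
  by move: o21; rewrite eq_o; lia.
have desc' : ((tperm o1 o2 * g)%g o2 < (tperm o1 o2 * g)%g o1)%N by rewrite !permM tpermL tpermR.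
case/andP: (covers_descent o21 desc') => /andP [_]; rewrite mulgA tperm2 mul1g => le_gt _.
case/andP: lt_tg => _ /andP [neq_tg le_tg].
by move: neq_tg; rewrite (weak_le_anti le_tg le_gt) eqxx.
Qed.
End Covers.

Section ArcPerm.
Variables (n : nat) (S : nat -> bool) (a b : 'I_n).
Hypothesis ab : (a < b)%N.
Implicit Types (x z : 'S_n) (v w : 'I_n).

Local Notation gamma := (@arc_perm n a b S).

Lemma arc_set_lo : arc_set a b S a.
Proof. by rewrite /arc_set eqxx. Qed.

Lemma arc_set_hi : arc_set a b S b = false.
Proof. by rewrite /arc_set; lia. Qed.

Local Notation gamma_lower := (@arc_perm_lower n a b S).

Lemma inverted_arc_perm_lower v w : (v < w)%N ->
  inverted gamma_lower v w =
  arc_set a b S v && ~~ arc_set a b S w && ~~ ((v == a) && (w == b)).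
Proof.
move=> vw; rewrite inverted_sort_perm // /arc_key /arc_set -!val_eqE /=.
have := ltn_ord v; have := ltn_ord w; have := ltn_ord b.
by case: (S v); case: (S w); repeat (case: ifP => //=); lia.
Qed.

Lemma arc_perm_adjacent : (gamma^-1 a : nat) = (gamma^-1 b).+1.
Proof.
rewrite /arc_perm /sort_perm invgK !permE /=.
have -> : lower_set (lex_key (arc_key a b S)) a = b |: lower_set (lex_key (arc_key a b S)) b.
  apply/setP => w; rewrite !inE !ltn_lex_key /arc_key /arc_set -!val_eqE /=.
  have := ltn_ord w; have := ltn_ord a; have := ltn_ord b.
  by case: (S w); case: (S a); case: (S b); repeat (case: ifP => //=); lia.
by rewrite cardsU1 inE ltnn.
Qed.

Lemma arc_perm_lowerE : tperm (gamma^-1 b) (gamma^-1 a) * gamma = gamma_lower.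
Proof.
apply: perm_inverted_eq => v w vw.
have invE u o : ((gamma^-1 u : nat) == gamma^-1 o) = (u == o).
  by rewrite val_eqE (inj_eq perm_inj).
rewrite (inverted_tperm_mul _ arc_perm_adjacent); last by rewrite -val_eqE /= neq_ltn vw.
rewrite !invE inverted_arc_perm // inverted_arc_perm_lower //.
have -> : (v == b) && (w == a) = false.
  by apply/negbTE; apply: contraTN vw => /andP [/eqP -> /eqP ->]; rewrite -leqNgt ltnW.
case: (boolP ((v == a) && (w == b))) => [/andP [/eqP -> /eqP ->] | _]; last by rewrite andbT.
by rewrite arc_set_lo arc_set_hi.
Qed.

Lemma covers_arc_perm_lower : covers gamma gamma_lower.
Proof.
rewrite -arc_perm_lowerE; apply: covers_descent; first exact: arc_perm_adjacent.
by rewrite !permKV.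
Qed.

Lemma arc_perm_le_of_inverted z : weak_le z gamma -> inverted z a b -> weak_le gamma z.
Proof.
move=> /weak_leP le_z z_ab; apply/weak_leP => v w vw; rewrite inverted_arc_perm //.
case/andP=> Av Aw; have av : (a <= v)%N by move: Av vw Aw; rewrite /arc_set; lia.
have wb : (w <= b)%N by move: Av vw Aw; rewrite /arc_set; lia.
have za : (z^-1 a <= z^-1 v)%N.
  case: (ltngtP a v) av => // [lt_av _ | /val_inj -> _]; last exact: leqnn.
  have := le_z a v lt_av; rewrite inverted_arc_perm // arc_set_lo Av /inverted /=.
  by case: (leqP (z^-1 a) (z^-1 v)) => // _ /(_ isT).
have zb : (z^-1 w <= z^-1 b)%N.
  case: (ltngtP w b) wb => // [lt_wb _ | /val_inj -> _]; last exact: leqnn.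
  have := le_z w b lt_wb; rewrite inverted_arc_perm // (negbTE Aw) /inverted /=.
  by case: (leqP (z^-1 w) (z^-1 b)) => // _ /(_ isT).
by move: z_ab; rewrite /inverted; lia.
Qed.

Lemma covers_arc_perm_eq z : covers gamma z -> z = gamma_lower.
Proof.
case/andP=> /andP [neq_zg le_zg] /forallP no_between.
have z_ab : ~~ inverted z a b.
  apply: contra neq_zg => z_ab.
  by rewrite (weak_le_anti le_zg (arc_perm_le_of_inverted le_zg z_ab)).
have le_z_lower : weak_le z gamma_lower.
  apply/weak_leP => v w vw zvw; rewrite inverted_arc_perm_lower //.
  rewrite -inverted_arc_perm // ((weak_leP _ _ le_zg) _ _ vw zvw) /=.
  by apply: contra z_ab => /andP [/eqP <- /eqP <-].
apply: contraTeq (no_between gamma_lower) => neq_z.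
case/andP: covers_arc_perm_lower => /andP [neq_lower le_lower] _.
by rewrite /weak_lt neq_z le_z_lower neq_lower le_lower.
Qed.

Lemma join_irr_arc_perm : join_irr gamma.
Proof.
rewrite /join_irr -(cards1 gamma_lower); apply/eqP; congr #|pred_of_set _|.
apply/setP => z; rewrite !inE.
by apply/idP/eqP => [|->]; [exact: covers_arc_perm_eq | exact: covers_arc_perm_lower].
Qed.

Lemma arc_perm_reflection : assoc_left_reflection gamma (tperm a b).
Proof.
have ed : (gamma^-1 a : nat) = (gamma^-1 b).+1 := arc_perm_adjacent.
exists (gamma^-1 a); rewrite (right_descent_tperm _ ed) // !permKV; split=> //.
by rewrite (sgenE (o := gamma^-1 b) (o' := gamma^-1 a)) ?ed // comp_tperm_conj !permKV tpermC.
Qed.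

Lemma arc_perm_lists (A : {set 'I_n}) : (forall k, (k \in A) = arc_set a b S k) ->
  lists_compl_then A gamma.
Proof.
move=> memA; split=> [i | i j ij].
- rewrite memA -{2}(permK gamma i); set v := gamma i.
  rewrite /arc_perm /sort_perm invgK permE /=.
  case Av : (arc_set a b S v); apply/esym.
    apply: subset_leq_card; apply/subsetP => w; rewrite !inE memA ltn_lex_key /arc_key Av.
    by move=> /negbTE ->; have := ltn_ord w; lia.
  apply/negbTE; rewrite -ltnNge (cardsD1 v (~: A)) !inE memA Av /=.
  apply: subset_leq_card; apply/subsetP => w; rewrite !inE memA ltn_lex_key /arc_key Av.
  by case: (arc_set a b S w); rewrite -?val_eqE /=; have := ltn_ord w; have := ltn_ord v; lia.
- rewrite !memA => eqA.
  case: (ltngtP (gamma i) (gamma j)) => // [lt_ji | /val_inj /perm_inj eq_ij].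
    by have := inverted_arc_perm a b S lt_ji; rewrite eqA andbN /inverted !permK ij.
  by move: ij; rewrite eq_ij ltnn.
Qed.

End ArcPerm.

Lemma arc_perm_up_not_contracted n (up : nat -> bool) (a b : 'I_n) : (a < b)%N ->
  ~ contracts (Theta up) (@arc_perm n a b (fun r => up r.+1)).
Proof.
move=> ab [z [cov_z /Theta_arc_cong cong_z]].
have le_gz : weak_le (@arc_perm n a b (fun r => up r.+1)) z.
  by apply/(cong_z a b ab); apply: weak_le_refl.
case/andP: cov_z => /andP [neq_zg le_zg] _.
by move: neq_zg; rewrite (weak_le_anti le_zg le_gz) eqxx.
Qed.

Section Regions.
Local Open Scope nat_scope.

Variant region_spec (a c b v : nat) :
  bool -> bool -> bool -> bool -> bool -> bool -> bool -> bool -> Prop :=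
| RegionBelow of v < a : region_spec a c b v false false false false false true true false
| RegionLo of v = a : region_spec a c b v true false false false false true true false
| RegionLeft of a < v & v < c : region_spec a c b v false false false true false true true false
| RegionMid of v = c : region_spec a c b v false true false true false false true false
| RegionRight of c < v & v < b : region_spec a c b v false false false true true false true false
| RegionHi of v = b : region_spec a c b v false false true true true false false false
| RegionAbove of b < v : region_spec a c b v false false false true true false false true.

Lemma regionP a c b v : a < c -> c < b ->
  region_spec a c b v (v == a) (v == c) (v == b) (a < v) (c < v) (v < c) (v < b) (b < v).
Proof.
move=> ac cb; case: (ltngtP v a) => ?; case: (ltngtP v c) => ?; case: (ltngtP v b) => ?;
  first [by constructor | exfalso; lia].
Qed.

End Regions.

Ltac decide_ifs := repeat match goal with |- context [if ?c then _ else _] =>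
  lazymatch c with true => fail | false => fail | _ =>
  first [rewrite (_ : c = true) /=; last lia | rewrite (_ : c = false) /=; last lia] end end.

(* The context is cleared to keep the many [lia] calls cheap. *)
Ltac regions_split ac cb v w :=
  move: (nat_of_ord v) (nat_of_ord w) => {}v {}w; move: ac cb; clear => ac cb;
  case: (regionP v ac cb) => [?|->|??|->|??|->|?];
  case: (regionP w ac cb) => [?|->|??|->|??|->|?] /=.

Ltac regions_finish S :=
  repeat match goal with |- context [S ?x] => case: (S x) => /= end; decide_ifs; lia.

(* [by_regions S ac cb v w] decides an arithmetic goal about explicit keys at
   the ordinals [v] and [w] by locating each of them relative to [a < c < b]
   (given [ac : a < c] and [cb : c < b]) and then casing on the values of [S]. *)
Ltac by_regions S ac cb v w :=
  have := ltn_ord v; have := ltn_ord w; rewrite /arc_key /arc_set /=;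
  regions_split ac cb v w; regions_finish S.

Ltac by_regions_with S Sc ac cb v w :=
  have := ltn_ord v; have := ltn_ord w; rewrite /arc_key /arc_set /=; move: Sc;
  regions_split ac cb v w; move=> Sc; rewrite ?Sc; regions_finish S.

Section Forcing.
Variable n : nat.
Implicit Types (S : nat -> bool) (a b : nat).

(* In one-line notation: the values outside [arc_set a b S] and different from
   [e1], [e2], [e3] increasingly, then [e1 e2 e3], then the remaining values of
   [arc_set a b S] increasingly. *)
Definition arc_perm3 a b S (e1 e2 e3 : nat) : 'S_n :=
  sort_perm (fun v => if (v : nat) == e1 then 4 * n + 4 * a + 1
                      else if (v : nat) == e2 then 4 * n + 4 * a + 2
                      else if (v : nat) == e3 then 4 * n + 4 * a + 3
                      else arc_key a b S v)%N.

Lemma force_left (R : 'S_n -> 'S_n -> Prop) S a b :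
  lattice_congruence R -> (a.+1 < b < n)%N ->
  R (arc_perm_lower a.+1 b S) (arc_perm a.+1 b S) -> R (arc_perm_lower a b S) (arc_perm a b S).
Proof.
move=> congR /andP [cb bn] Rc; have ac := ltnSn a; have a1n : (a.+1 < n)%N by lia.
pose x := arc_perm3 a b S a.+1 a b; pose j := arc_perm3 a b S b a.+1 a.
have le_lower_x : weak_le (arc_perm_lower a.+1 b S) x.
  by apply: sort_perm_le => v w; by_regions S ac cb v w.
have join_j : is_join (arc_perm a.+1 b S) x j.
  apply: is_joinI => [||v w vw]; try by apply: sort_perm_le => v w; by_regions S ac cb v w.
  case: (boolP (((v : nat) == a) && ((w : nat) == b))) => [/andP [/eqP ev /eqP ew] _ | ne inv_j].
  - apply: Or33; exists (Ordinal a1n); first by rewrite /= ev ew ac cb.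
    rewrite !inverted_sort_perm /= ?ev ?ew // /arc_key /arc_set /= ev ew.
    by move: cb bn; clear => cb bn; regions_finish S.
  - have : inverted (arc_perm a.+1 b S) v w || inverted x v w.
      by move: ne inv_j; rewrite !inverted_sort_perm //; move: vw; by_regions S ac cb v w.
    by case/orP => inv; [apply: Or31 | apply: Or32].
have le_g_j : weak_le (arc_perm a b S) j by apply: sort_perm_le => v w; by_regions S ac cb v w.
have le_h_g : weak_le (arc_perm_lower a b S) (arc_perm a b S : 'S_n).
  by apply: sort_perm_le => v w; by_regions S ac cb v w.
case Sc : (S a.+1).
- apply: (congruence_transfer (u := arc_perm3 a b S a a.+1 b) congR Rc le_lower_x join_j le_g_j
          _ _ le_h_g).
    apply: is_meetI => [||v w vw];
      try by apply: sort_perm_le => v w; by_regions_with S Sc ac cb v w.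
    by rewrite !inverted_sort_perm //; move: vw; by_regions_with S Sc ac cb v w.
  by apply: sort_perm_le => v w; by_regions_with S Sc ac cb v w.
- apply: (congruence_transfer congR Rc le_lower_x join_j le_g_j _ (weak_le_refl _) le_h_g).
  apply: is_meetI => [||v w vw]; try by apply: sort_perm_le => v w; by_regions_with S Sc ac cb v w.
  by rewrite !inverted_sort_perm //; move: vw; by_regions_with S Sc ac cb v w.
Qed.

Lemma force_right (R : 'S_n -> 'S_n -> Prop) S a b :
  lattice_congruence R -> (a.+1 < b < n)%N ->
  R (arc_perm_lower a b.-1 S) (arc_perm a b.-1 S) -> R (arc_perm_lower a b S) (arc_perm a b S).
Proof.
move=> congR /andP [ab bn] Rc.
have ac : (a < b.-1)%N by lia.
have cb : (b.-1 < b)%N by lia.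
have b1n : (b.-1 < n)%N by lia.
pose x := arc_perm3 a b S a b b.-1; pose j := arc_perm3 a b S b b.-1 a.
have le_lower_x : weak_le (arc_perm_lower a b.-1 S) x.
  by apply: sort_perm_le => v w; by_regions S ac cb v w.
have join_j : is_join (arc_perm a b.-1 S) x j.
  apply: is_joinI => [||v w vw]; try by apply: sort_perm_le => v w; by_regions S ac cb v w.
  case: (boolP (((v : nat) == a) && ((w : nat) == b))) => [/andP [/eqP ev /eqP ew] _ | ne inv_j].
  - apply: Or33; exists (Ordinal b1n); first by rewrite /= ev ew ac cb.
    rewrite !inverted_sort_perm /= ?ev ?ew // /arc_key /arc_set /= ev ew.
    by move: ac cb bn; clear => ac cb bn; regions_finish S.
  - have : inverted (arc_perm a b.-1 S) v w || inverted x v w.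
      by move: ne inv_j; rewrite !inverted_sort_perm //; move: vw; by_regions S ac cb v w.
    by case/orP => inv; [apply: Or31 | apply: Or32].
have le_g_j : weak_le (arc_perm a b S) j by apply: sort_perm_le => v w; by_regions S ac cb v w.
have le_h_g : weak_le (arc_perm_lower a b S) (arc_perm a b S : 'S_n).
  by apply: sort_perm_le => v w; by_regions S ac cb v w.
case Sc : (S b.-1).
- apply: (congruence_transfer congR Rc le_lower_x join_j le_g_j _ (weak_le_refl _) le_h_g).
  apply: is_meetI => [||v w vw]; try by apply: sort_perm_le => v w; by_regions_with S Sc ac cb v w.
  by rewrite !inverted_sort_perm //; move: vw; by_regions_with S Sc ac cb v w.
- apply: (congruence_transfer (u := arc_perm3 a b S a b.-1 b) congR Rc le_lower_x join_j le_g_j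
          _ _ le_h_g).
    apply: is_meetI => [||v w vw];
      try by apply: sort_perm_le => v w; by_regions_with S Sc ac cb v w.
    by rewrite !inverted_sort_perm //; move: vw; by_regions_with S Sc ac cb v w.
  by apply: sort_perm_le => v w; by_regions_with S Sc ac cb v w.
Qed.

Lemma force_base (up : nat -> bool) (R : 'S_n -> 'S_n -> Prop) S a :
  (forall x y, edge_rel up x y -> R x y) -> (a.+2 < n)%N -> S a.+1 != up a.+2 ->
  R (arc_perm_lower a a.+2 S) (arc_perm a a.+2 S).
Proof.
move=> genR an Sc_up; have ac := ltnSn a; have cb := ltnSn a.+1.
have a1n : (a.+1 < n)%N by lia.
pose o1 := Ordinal (ltn_trans (ltnSn a) a1n); pose o2 := Ordinal a1n; pose o3 := Ordinal an.
have o21 : (o2 : nat) = o1.+1 by []; have o32 : (o3 : nat) = o2.+1 by [].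
have : edge_rel up (if up a.+2 then sgen n a.+1 else sgen n a.+2)
    (if up a.+2 then Defs.comp (sgen n a.+1) (sgen n a.+2)
     else Defs.comp (sgen n a.+2) (sgen n a.+1)).
  by exists a.+2; split=> //; [lia | case: (up a.+2)].
rewrite /Defs.comp (sgenE (o := o1) (o' := o2)) // (sgenE (o := o2) (o' := o3)) //.
case upE : (up a.+2) => /= edge.
- have Sc : S a.+1 = false by move: Sc_up; rewrite upE; case: (S a.+1).
  have -> : arc_perm_lower a a.+2 S = tperm o1 o2.
    apply: perm_inverted_eq => v w vw; rewrite inverted_tperm // inverted_sort_perm //.
    by rewrite -!val_eqE /=; move: vw; by_regions_with S Sc ac cb v w.
  have -> : arc_perm a a.+2 S = tperm o2 o3 * tperm o1 o2.
    apply: perm_inverted_eq => v w vw; rewrite inverted_tperm_up // inverted_sort_perm //.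
    by rewrite -!val_eqE /=; move: vw; by_regions_with S Sc ac cb v w.
  exact: genR.
- have Sc : S a.+1 = true by move: Sc_up; rewrite upE; case: (S a.+1).
  have -> : arc_perm_lower a a.+2 S = tperm o2 o3.
    apply: perm_inverted_eq => v w vw; rewrite inverted_tperm // inverted_sort_perm //.
    by rewrite -!val_eqE /=; move: vw; by_regions_with S Sc ac cb v w.
  have -> : arc_perm a a.+2 S = tperm o1 o2 * tperm o2 o3.
    apply: perm_inverted_eq => v w vw; rewrite inverted_tperm_down // inverted_sort_perm //.
    by rewrite -!val_eqE /=; move: vw; by_regions_with S Sc ac cb v w.
  exact: genR.
Qed.

Lemma Theta_arc_perm_lower (up : nat -> bool) S a b : (a < b < n)%N ->
  (exists2 c, (a < c < b)%N & S c != up c.+1) ->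
  Theta up (arc_perm a b S : 'S_n) (arc_perm_lower a b S).
Proof.
move=> abn S_up R congR genR; case: (congR) => _ Rsym _ _ _; apply: Rsym.
have [d le_d] : exists d, (b - a <= d)%N by exists (b - a).
elim: d => [|d IH] in a b abn S_up le_d *; first by lia.
case: S_up => c /andP [ac cb] Sc.
have [eb | neb] := eqVneq b a.+2.
  have ec : c = a.+1 by lia.
  by subst b c; apply: force_base genR _ Sc; lia.
have [lt_a1c | le_ca1] := ltnP a.+1 c.
  by apply: force_left; [| lia | apply: IH; [lia | exists c; [lia |] | lia]].
have ec : c = a.+1 by lia.
by apply: force_right; [| lia | apply: IH; [lia | exists c; [lia |] | lia]].
Qed.

End Forcing.

Section JoinIrreducibles.
Variable n : nat.
Implicit Types (g : 'S_n) (i j e : 'I_n).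

Lemma join_irr_descent_uniq g (o1 o2 e e' : 'I_n) : join_irr g ->
  (o2 : nat) = o1.+1 -> (g o2 < g o1)%N -> (e' : nat) = e.+1 -> (g e' < g e)%N -> e = o1.
Proof.
move=> irr_g o21 desc e'e desc'; apply/eqP; apply: contraTT irr_g => neq_e.
have neq_covers : tperm e e' * g != tperm o1 o2 * g.
  apply: contra neq_e => /eqP /mulIg /(congr1 (fun s : 'S_n => (s e : nat))).
  rewrite tpermL tpermE_nat e'e; case: ifP => [/eqP /val_inj -> // | _].
  by case: ifP => [/eqP | _]; lia.
have : [set tperm e e' * g; tperm o1 o2 * g] \subset [set z | covers g z].
  by apply/subsetP => z; rewrite !inE => /orP [] /eqP ->; apply: covers_descent.
by move/subset_leq_card; rewrite cards2 neq_covers /join_irr; case: #|_| => [|[|]].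
Qed.

Section TwoBlocks.
Variables (g : 'S_n) (o1 o2 : 'I_n).
Hypotheses (o21 : (o2 : nat) = o1.+1) (desc : (g o2 < g o1)%N).
Hypothesis ascent : forall e e' : 'I_n, (e' : nat) = e.+1 -> e != o1 -> (g e < g e')%N.

Lemma increasing_blocks i j : (i < j)%N -> (j <= o1)%N || (o1 < i)%N -> (g i < g j)%N.
Proof.
have [d le_d] : exists d, (j - i <= d)%N by exists (j - i).
elim: d => [|d IH] in i j le_d *; first by lia.
move=> ij block; have [ji | ltij] := eqVneq (j : nat) i.+1.
  by apply: ascent ji _; apply/eqP => /(congr1 val) /= eio1; move: block; lia.
have j1n : (j.-1 < n)%N by move: (ltn_ord j); lia.
apply: (@ltn_trans (g (Ordinal j1n))); first by apply: IH => /=; lia.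
apply: ascent => /=; first by lia.
by rewrite -val_eqE /=; lia.
Qed.

Definition second_block (v : nat) : bool := if insub v is Some o then (o1 < g^-1 o)%N else false.

Lemma second_blockE (v : 'I_n) : second_block v = (o1 < g^-1 v)%N.
Proof. by rewrite /second_block valK. Qed.

Lemma arc_set_second_block (v : 'I_n) :
  arc_set (g o2) (g o1) second_block v = (o1 < g^-1 v)%N.
Proof.
rewrite /arc_set second_blockE; have gv : v = g (g^-1 v) by rewrite permKV.
set p := g^-1 v in gv *; have [lt_o1p | le_po1] := ltnP o1 p.
  have [po2 | npo2] := eqVneq p o2; first by rewrite gv po2 eqxx.
  have lt_av : (g o2 < v)%N.
    rewrite gv; apply: increasing_blocks; last by rewrite o21 ltnSn orbT.
    by move: npo2; rewrite -val_eqE /=; lia.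
  have neq_vb : (v : nat) != g o1.
    by rewrite gv val_eqE (inj_eq perm_inj); apply: contraTneq lt_o1p => ->; rewrite ltnn.
  by move: lt_av neq_vb; lia.
have le_vb : (v <= g o1)%N.
  have [po1 | npo1] := eqVneq p o1; first by rewrite gv po1.
  rewrite gv ltnW //; apply: increasing_blocks; last by rewrite leqnn.
  by move: npo1; rewrite -val_eqE /=; lia.
have neq_va : (v : nat) != g o2.
  by rewrite gv val_eqE (inj_eq perm_inj); apply: contraTneq le_po1 => ->; rewrite o21 ltnn.
by move: le_vb neq_va; rewrite andbF; lia.
Qed.

Lemma two_blocks_arc_perm : g = arc_perm (g o2) (g o1) second_block.
Proof.
apply: perm_inverted_eq => v w vw; rewrite inverted_arc_perm // !arc_set_second_block /inverted.
have neq_vw : g^-1 v != g^-1 w by rewrite (inj_eq perm_inj) -val_eqE neq_ltn vw.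
have [lt_o1v | le_vo1] := ltnP o1 (g^-1 v); have [lt_o1w | le_wo1] := ltnP o1 (g^-1 w) => /=.
- apply/negbTE; rewrite -leqNgt; apply: contraTT vw; rewrite -ltnNge => lt_wv.
  by rewrite -leqNgt -(permKV g v) -(permKV g w) ltnW // increasing_blocks // lt_o1w orbT.
- by apply: leq_ltn_trans le_wo1 lt_o1v.
- by apply/negbTE; rewrite -leqNgt; apply: leq_trans le_vo1 (ltnW lt_o1w).
- apply/negbTE; rewrite -leqNgt; apply: contraTT vw; rewrite -ltnNge => lt_wv.
  by rewrite -leqNgt -(permKV g v) -(permKV g w) ltnW // increasing_blocks // le_vo1.
Qed.

End TwoBlocks.

Lemma join_irr_is_arc_perm g (a b : 'I_n) : (a < b)%N ->
  join_irr g -> assoc_left_reflection g (tperm a b) -> exists S, g = arc_perm a b S.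
Proof.
move=> ab irr_g [i [rd_i refl_i]].
have [o1 [o2 [o21 o2i]]] : exists o1 o2 : 'I_n, (o2 : nat) = o1.+1 /\ (o2 : nat) = i.
  case/and3P: rd_i => i_pos i_lt _.
  have lt_in : (i < n)%N by lia.
  by exists (Ordinal (leq_ltn_trans (leq_pred i) lt_in)), (Ordinal lt_in); rewrite /= prednK.
have desc : (g o2 < g o1)%N by rewrite -(right_descent_tperm _ o21 o2i).
have o1i : (o1 : nat) = i.-1 by rewrite -o2i o21.
move: refl_i; rewrite (sgenE o1i o2i) comp_tperm_conj => /(congr1 (fun s : 'S_n => s a)).
rewrite tpermL; case: tpermP => [ea eb | ea eb | _ _ eb]; last by move: ab; rewrite eb ltnn.
  by move: ab desc; rewrite ea eb; lia.
exists (second_block g o1); rewrite ea eb; apply: two_blocks_arc_perm => //.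
move=> e e' e'e neq_e; case: (ltngtP (g e) (g e')) => // [desc' | /val_inj /perm_inj eq_e].
  by move: neq_e; rewrite (join_irr_descent_uniq irr_g o21 desc e'e desc') eqxx.
by move: e'e; rewrite eq_e; lia.
Qed.

End JoinIrreducibles.

Lemma eq_arc_perm n a b (S S' : nat -> bool) : (forall c, (a < c < b)%N -> S c = S' c) ->
  arc_perm a b S = arc_perm a b S' :> 'S_n.
Proof.
move=> eqS; have eq_set u : arc_set a b S u = arc_set a b S' u.
  by rewrite /arc_set; case: (boolP (a < u < b)%N) => // /eqS ->.
by apply: perm_inverted_eq => v w vw; rewrite !inverted_arc_perm // !eq_set.
Qed.

Lemma eq_arc_perm_up n (up : nat -> bool) (a b : 'I_n) S : (a < b)%N ->
  ~ contracts (Theta up) (arc_perm a b S : 'S_n) ->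
  arc_perm a b S = arc_perm a b (fun r => up r.+1) :> 'S_n.
Proof.
move=> ab not_contr; apply: eq_arc_perm => c acb; apply/eqP/negPn/negP => S_up.
apply: not_contr; exists (arc_perm_lower a b S); split.
  exact: covers_arc_perm_lower.
by apply: Theta_arc_perm_lower; [rewrite ab ltn_ord | exists c].
Qed.

Theorem proposition6p7 (n : nat) (up : nat -> bool) (a b : 'I_n) :
  (a < b)%N ->
  let P := fun g : 'S_n =>
    [/\ join_irr g, ~ contracts (Theta up) g & assoc_left_reflection g (tperm a b)] in
  (exists! g : 'S_n, P g) /\
  (forall g : 'S_n, P g ->
     lists_compl_then
       [set k : 'I_n | [|| k == a, ((a < k)%N && (k < b)%N && up k.+1) | (b < k)%N]] g).
Proof.
move=> ab P; pose gamma := arc_perm a b (fun r => up r.+1) : 'S_n.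
have P_gamma : P gamma.
  split; [exact: join_irr_arc_perm | exact: arc_perm_up_not_contracted |].
  exact: arc_perm_reflection.
have P_uniq g : P g -> g = gamma.
  case=> irr_g not_contr refl_g; have [S eq_g] := join_irr_is_arc_perm ab irr_g refl_g.
  by rewrite eq_g in not_contr *; apply: eq_arc_perm_up.
split=> [|g /P_uniq ->]; first by exists gamma; split=> // g /P_uniq.
by apply: arc_perm_lists => // k; rewrite inE.
Qed.
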